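(* Let $V$ be a complex normed vector space and $x\in l^{\infty}(V)$. Then $p(x)=0$ if and only if $L(x)=0$ for every Banach limit functional $L$ on $l^\infty(V)$.
   Context: $\mathbb{N}=\{1,2,3,\dots\}$. $l^{\infty}(V)$ is the space of bounded sequences $x=\{x_n\}_{n=1}^\infty$ in $V$ with norm $\|x\|_\infty=\sup_n\|x_n\|_V$. $T$ is the left shift: $T\{x_1,x_2,x_3,\dots\}=\{x_2,x_3,\dots\}$. A Banach limit functional is a bounded (complex-)linear functional $L$ on $l^\infty(V)$ such that $\|L\|\le 1$ and $L(Tx)=L(x)$ for all $x\in l^\infty(V)$. For $x\in l^\infty(V)$, $p(x):=\lim_{n\to\infty}\left(\sup_{j\in\mathbb{N}}\frac1n\left\|\sum_{i=0}^{n-1}x_{i+j}\right\|_V\right)$ (this limit exists). *)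

From Stdlib Require Import Reals.
Open Scope R_scope.

Record Cplx := mkC { Re : R; Im : R }.
Definition C0 : Cplx := mkC 0 0.
Definition C1 : Cplx := mkC 1 0.
Definition Cadd (a b : Cplx) : Cplx := mkC (Re a + Re b) (Im a + Im b).
Definition Cmul (a b : Cplx) : Cplx :=
  mkC (Re a * Re b - Im a * Im b) (Re a * Im b + Im a * Re b).
Definition Cabs (a : Cplx) : R := sqrt (Re a * Re a + Im a * Im a).

Record NormedCSpace := {
  vT :> Type;
  vzero : vT;
  vadd : vT -> vT -> vT;
  vopp : vT -> vT;
  vscal : Cplx -> vT -> vT;
  vnorm : vT -> R;
  vaddA : forall u v w, vadd u (vadd v w) = vadd (vadd u v) w;
  vaddC : forall u v, vadd u v = vadd v u;
  vadd0 : forall u, vadd u vzero = u;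
  vaddN : forall u, vadd u (vopp u) = vzero;
  vscal_addl : forall a b u, vscal (Cadd a b) u = vadd (vscal a u) (vscal b u);
  vscal_addr : forall a u v, vscal a (vadd u v) = vadd (vscal a u) (vscal a v);
  vscal_mul : forall a b u, vscal (Cmul a b) u = vscal a (vscal b u);
  vscal1 : forall u, vscal C1 u = u;
  vnorm_triangle : forall u v, vnorm (vadd u v) <= vnorm u + vnorm v;
  vnorm_scal : forall a u, vnorm (vscal a u) = Cabs a * vnorm u;
  vnorm_eq0 : forall u, vnorm u = 0 -> u = vzero
}.

Section Seqs.
Variable V : NormedCSpace.

(* A sequence {x_1, x_2, ...} is represented by x : nat -> V with x 0 = x_1. *)
Definition linf_bounded (x : nat -> V) : Prop :=
  exists M, forall n, vnorm V (x n) <= M.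

Definition seq_add (x y : nat -> V) : nat -> V := fun n => vadd V (x n) (y n).
Definition seq_scal (a : Cplx) (x : nat -> V) : nat -> V := fun n => vscal V a (x n).

Definition shift (x : nat -> V) : nat -> V := fun n => x (S n).

(* L is given as a function on all
   sequences; only its values on linf_bounded sequences (= l^oo(V)) matter.
   ||L|| <= 1 is written out as |L x| <= ||x||_oo, i.e. |L x| <= M for every
   bound M of the norms of the x_n. *)
Definition BanachLimit (L : (nat -> V) -> Cplx) : Prop :=
  (forall x y, linf_bounded x -> linf_bounded y -> L (seq_add x y) = Cadd (L x) (L y)) /\
  (forall a x, linf_bounded x -> L (seq_scal a x) = Cmul a (L x)) /\
  (forall x M, linf_bounded x -> (forall n, vnorm V (x n) <= M) -> Cabs (L x) <= M) /\
  (forall x, linf_bounded x -> L (shift x) = L x).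

Fixpoint vsum (f : nat -> V) (n : nat) : V :=
  match n with
  | O => vzero V
  | S k => vadd V (vsum f k) (f k)
  end.

Definition avg (x : nat -> V) (n j : nat) : R :=
  / INR n * vnorm V (vsum (fun i => x (i + j)%nat) n).

(* p_val x l  :<->  p(x) = l, i.e. s_n := sup_j avg x n j  (n >= 1)
   exists and s_n -> l. *)
Definition p_val (x : nat -> V) (l : R) : Prop :=
  exists s : nat -> R,
    (forall n, is_lub (fun r => exists j, r = avg x (S n) j) (s n)) /\
    Un_cv s l.

End Seqs.
Arguments linf_bounded {V}.
Arguments BanachLimit {V}.
Arguments p_val {V}.

From Stdlib Require Import Reals Lra Lia Classical ClassicalEpsilon FunctionalExtensionality ProofIrrelevance.
From mathcomp Require classical_sets.
Open Scope R_scope.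

(* (=>) A Banach limit L is shift invariant, so L x = L (block averages of x),
   and |L| <= ||.||_oo gives |L x| <= s_n(x) := sup_j (1/(n+1)) ||x_j + ... + x_(j+n)||
   for every n; hence p(x) = 0 forces L x = 0.

   (<=) The functional P(y) = limsup_n s_n(y) is sublinear on l^oo(V) (viewed as a
   real vector space), bounded by ||y||_oo, satisfies P(Ty - y) <= 0 by telescoping,
   and P(x) <= 0 already gives p(x) = 0.  If P(x) > 0, the Hahn-Banach theorem
   (proved below via Zorn's lemma: a minimal sublinear functional is linear) gives
   a real linear f <= P with f x >= P x > 0.  Its complexification
   L y = f y - i f (i y) is a Banach limit with L x <> 0. *)

(* Supremum and infimum of a family f over the indices satisfying P, chosen by
   Hilbert's epsilon; they are meaningful when the family is nonempty and bounded. *)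
Definition sup_on {I : Type} (P : I -> Prop) (f : I -> R) : R :=
  epsilon (inhabits 0) (is_lub (fun r => exists i, P i /\ r = f i)).

Definition inf_on {I : Type} (P : I -> Prop) (f : I -> R) : R :=
  - sup_on P (fun i => - f i).

Lemma sup_on_lub {I : Type} (P : I -> Prop) (f : I -> R) :
  (exists i, P i) -> (exists M, forall i, P i -> f i <= M) ->
  is_lub (fun r => exists i, P i /\ r = f i) (sup_on P f).
Proof.
  intros [i Hi] [M HM]. unfold sup_on. apply epsilon_spec.
  destruct (completeness (fun r => exists i, P i /\ r = f i)) as [l Hl].
  - exists M. intros r [j [Hj ->]]. auto.
  - exists (f i). eauto.
  - exists l. exact Hl.
Qed.

Lemma sup_on_ub {I : Type} (P : I -> Prop) (f : I -> R) (i : I) :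
  (exists M, forall j, P j -> f j <= M) -> P i -> f i <= sup_on P f.
Proof. intros HM Hi. apply (sup_on_lub P f); eauto. Qed.

Lemma sup_on_le {I : Type} (P : I -> Prop) (f : I -> R) (M : R) :
  (exists i, P i) -> (forall i, P i -> f i <= M) -> sup_on P f <= M.
Proof.
  intros Hne HM. apply (sup_on_lub P f Hne); eauto.
  intros r [i [Hi ->]]. auto.
Qed.

Lemma inf_on_lb {I : Type} (P : I -> Prop) (f : I -> R) (i : I) :
  (exists m, forall j, P j -> m <= f j) -> P i -> inf_on P f <= f i.
Proof.
  intros [m Hm] Hi. unfold inf_on.
  assert (- f i <= sup_on P (fun j => - f j)); [|lra].
  apply (sup_on_ub P (fun j => - f j) i); auto. exists (- m). intros j Hj. specialize (Hm j Hj). lra.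
Qed.

Lemma le_inf_on {I : Type} (P : I -> Prop) (f : I -> R) (m : R) :
  (exists i, P i) -> (forall i, P i -> m <= f i) -> m <= inf_on P f.
Proof.
  intros Hne Hm. unfold inf_on.
  assert (sup_on P (fun j => - f j) <= - m); [|lra].
  apply sup_on_le; auto. intros i Hi. specialize (Hm i Hi). lra.
Qed.

Lemma le_scaled_inf_on {I : Type} (P : I -> Prop) (f : I -> R) (a t : R) :
  0 < t -> (exists i, P i) -> (forall i, P i -> a <= t * f i) -> a <= t * inf_on P f.
Proof.
  intros Ht Hne H.
  assert (Hdiv : a / t <= inf_on P f).
  { apply le_inf_on; auto. intros i Hi. specialize (H i Hi).
    apply Rmult_le_reg_l with t; [exact Ht|]. replace (t * (a / t)) with a by (field; lra). exact H. }
  replace a with (t * (a / t)) by (field; lra). apply Rmult_le_compat_l; lra.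
Qed.

Lemma is_lub_ext (A B : R -> Prop) (l : R) :
  (forall r, A r <-> B r) -> is_lub A l -> is_lub B l.
Proof.
  intros HAB [Hub Hlub]. split.
  - intros r Hr. apply Hub, HAB, Hr.
  - intros m Hm. apply Hlub. intros r Hr. apply Hm, HAB, Hr.
Qed.

Definition bounded_seq (f : nat -> R) : Prop := exists M, forall n, Rabs (f n) <= M.

Definition tail_sup (f : nat -> R) (N : nat) : R := sup_on (fun n => (N <= n)%nat) f.

Definition limsup (f : nat -> R) : R := inf_on (fun _ : nat => True) (tail_sup f).

Section Limsup.
Variable f : nat -> R.
Hypothesis f_bounded : bounded_seq f.

Lemma bounded_seq_above : exists M, forall n, f n <= M.
Proof. destruct f_bounded as [M HM]. exists M. intros n. pose proof (Rle_abs (f n)). specialize (HM n). lra. Qed.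

Lemma tail_sup_ub (N n : nat) : (N <= n)%nat -> f n <= tail_sup f N.
Proof.
  intros Hn. apply sup_on_ub; auto.
  destruct bounded_seq_above as [M HM]. exists M. auto.
Qed.

Lemma tail_sup_le (N : nat) (M : R) : (forall n, (N <= n)%nat -> f n <= M) -> tail_sup f N <= M.
Proof. intros HM. apply sup_on_le; auto. exists N. lia. Qed.

Lemma tail_sup_antitone (N1 N2 : nat) : (N1 <= N2)%nat -> tail_sup f N2 <= tail_sup f N1.
Proof. intros HN. apply tail_sup_le. intros n Hn. apply tail_sup_ub. lia. Qed.

Lemma limsup_le_tail_sup (N : nat) : limsup f <= tail_sup f N.
Proof.
  apply inf_on_lb; auto. destruct f_bounded as [M HM]. exists (- M). intros K _.
  apply Rle_trans with (f K); [|apply tail_sup_ub; lia].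
  pose proof (Rle_abs (- f K)). rewrite Rabs_Ropp in H. specialize (HM K). lra.
Qed.

Lemma le_limsup (m : R) : (forall N, m <= tail_sup f N) -> m <= limsup f.
Proof. intros H. apply le_inf_on; auto. exists 0%nat. auto. Qed.

End Limsup.

Lemma limsup_le_sum (f g h : nat -> R) :
  bounded_seq f -> bounded_seq g -> bounded_seq h ->
  (forall n, h n <= f n + g n) -> limsup h <= limsup f + limsup g.
Proof.
  intros Hf Hg Hh Hfgh.
  assert (Htails : forall N1 N2, limsup h <= tail_sup f N1 + tail_sup g N2).
  { intros N1 N2. set (N := Nat.max N1 N2).
    apply Rle_trans with (tail_sup h N); [apply limsup_le_tail_sup; auto|].
    apply Rle_trans with (tail_sup f N + tail_sup g N).
    - apply tail_sup_le; auto. intros n Hn. specialize (Hfgh n).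
      pose proof (tail_sup_ub f Hf N n Hn). pose proof (tail_sup_ub g Hg N n Hn). lra.
    - pose proof (tail_sup_antitone f Hf N1 N ltac:(lia)).
      pose proof (tail_sup_antitone g Hg N2 N ltac:(lia)). lra. }
  assert (limsup h - limsup g <= limsup f); [|lra].
  apply le_limsup; auto. intros N1.
  assert (limsup h - tail_sup f N1 <= limsup g); [|lra].
  apply le_limsup; auto. intros N2. specialize (Htails N1 N2). lra.
Qed.

Lemma limsup_le_scale (f h : nat -> R) (t : R) :
  bounded_seq f -> bounded_seq h -> 0 <= t ->
  (forall n, h n <= t * f n) -> limsup h <= t * limsup f.
Proof.
  intros Hf Hh Ht Hfh.
  assert (Htail : forall N, limsup h <= t * tail_sup f N).
  { intros N. apply Rle_trans with (tail_sup h N); [apply limsup_le_tail_sup; auto|].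
    apply tail_sup_le; auto. intros n Hn. apply Rle_trans with (t * f n); auto.
    apply Rmult_le_compat_l; auto. apply tail_sup_ub; auto. }
  destruct (Req_dec t 0) as [->|Hne].
  - specialize (Htail 0%nat). lra.
  - apply le_scaled_inf_on; [lra | exists 0%nat; auto | auto].
Qed.

Lemma limsup_le_const (f : nat -> R) (M : R) :
  bounded_seq f -> (forall n, f n <= M) -> limsup f <= M.
Proof.
  intros Hf HM. apply Rle_trans with (tail_sup f 0); [apply limsup_le_tail_sup; auto|].
  apply tail_sup_le; auto.
Qed.

Lemma le_0_of_le_inv_succ (a c : R) : 0 <= c -> (forall N, a <= c / INR (S N)) -> a <= 0.
Proof.
  intros Hc H. apply Rnot_lt_le. intros Ha.
  destruct (archimed_cor1 (a / (c + 1))) as [N [HN HN0]]; [apply Rdiv_lt_0_compat; lra|].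
  specialize (H N). assert (HNpos : 0 < INR N) by (apply lt_0_INR; lia).
  assert (Hinv : / INR (S N) <= / INR N) by (apply Rinv_le_contravar; [lra | rewrite S_INR; lra]).
  assert (c / INR (S N) <= (c + 1) * / INR N).
  { unfold Rdiv. apply Rmult_le_compat; try lra. left; apply Rinv_0_lt_compat, lt_0_INR; lia. }
  assert ((c + 1) * / INR N < (c + 1) * (a / (c + 1))) by (apply Rmult_lt_compat_l; lra).
  replace ((c + 1) * (a / (c + 1))) with a in * by (field; lra). lra.
Qed.

Lemma limsup_le_vanishing (f : nat -> R) (c : R) :
  bounded_seq f -> 0 <= c -> (forall n, f n <= c / INR (S n)) -> limsup f <= 0.
Proof.
  intros Hf Hc Hfc. apply (le_0_of_le_inv_succ _ c Hc). intros N.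
  apply Rle_trans with (tail_sup f N); [apply limsup_le_tail_sup; auto|].
  apply tail_sup_le; auto. intros n Hn. apply Rle_trans with (c / INR (S n)); auto.
  unfold Rdiv. apply Rmult_le_compat_l; auto.
  apply Rinv_le_contravar; [apply lt_0_INR; lia | apply le_INR; lia].
Qed.

Lemma limsup_nonpos_cv (f : nat -> R) :
  bounded_seq f -> (forall n, 0 <= f n) -> limsup f <= 0 -> Un_cv f 0.
Proof.
  intros Hf Hpos Hlim eps Heps.
  assert (HN : exists N, tail_sup f N < eps).
  { apply not_all_not_ex. intros Hall.
    assert (eps <= limsup f); [|lra].
    apply le_limsup; auto. intros N. apply Rnot_lt_le, Hall. }
  destruct HN as [N HN]. exists N. intros n Hn. unfold R_dist. rewrite Rminus_0_r, Rabs_right.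
  - pose proof (tail_sup_ub f Hf N n Hn). lra.
  - apply Rle_ge, Hpos.
Qed.


(* Real vector spaces (scalar multiplication by -1 provides the opposite). *)
Record RealVectorSpace := {
  rv :> Type;
  rv_add : rv -> rv -> rv;
  rv_scal : R -> rv -> rv;
  rv_zero : rv;
  rv_addA : forall u v w, rv_add u (rv_add v w) = rv_add (rv_add u v) w;
  rv_addC : forall u v, rv_add u v = rv_add v u;
  rv_add0 : forall u, rv_add u rv_zero = u;
  rv_scal_addl : forall a b u, rv_scal (a + b) u = rv_add (rv_scal a u) (rv_scal b u);
  rv_scal_addr : forall a u v, rv_scal a (rv_add u v) = rv_add (rv_scal a u) (rv_scal a v);
  rv_scal_mul : forall a b u, rv_scal a (rv_scal b u) = rv_scal (a * b) u;
  rv_scal1 : forall u, rv_scal 1 u = u;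
  rv_scal0 : forall u, rv_scal 0 u = rv_zero
}.

Section HahnBanach.
Variable X : RealVectorSpace.
Local Notation add := (rv_add X).
Local Notation scal := (rv_scal X).
Local Notation zero := (rv_zero X).

Lemma rv_add_neg (u : X) : add u (scal (-1) u) = zero.
Proof.
  transitivity (scal (1 + -1) u); [now rewrite rv_scal_addl, rv_scal1|].
  replace (1 + -1) with 0 by ring. apply rv_scal0.
Qed.

Definition sublinear (q : X -> R) : Prop :=
  (forall u v, q (add u v) <= q u + q v) /\ (forall t u, 0 <= t -> q (scal t u) <= t * q u).

Definition linear (f : X -> R) : Prop :=
  (forall u v, f (add u v) = f u + f v) /\ (forall t u, f (scal t u) = t * f u).

Lemma sublinear_zero (q : X -> R) : sublinear q -> q zero = 0.
Proof.
  intros [Hadd Hhom].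
  pose proof (Hhom 0 zero (Rle_refl 0)) as H0. rewrite rv_scal0 in H0.
  pose proof (Hadd zero zero) as H1. rewrite rv_add0 in H1. lra.
Qed.

Lemma sublinear_hom (q : X -> R) (t : R) (u : X) : sublinear q -> 0 <= t -> q (scal t u) = t * q u.
Proof.
  intros Hq Ht. destruct (Req_dec t 0) as [->|Hne].
  - rewrite rv_scal0, sublinear_zero; auto. ring.
  - apply Rle_antisym; [apply Hq; auto|].
    assert (Hinv : q u <= / t * q (scal t u)).
    { rewrite <- (rv_scal1 X u) at 1. replace 1 with (/ t * t) by (field; auto).
      rewrite <- rv_scal_mul. apply Hq. left; apply Rinv_0_lt_compat; lra. }
    apply Rmult_le_compat_l with (r := t) in Hinv; [|lra].
    rewrite <- Rmult_assoc, Rinv_r, Rmult_1_l in Hinv; auto.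
Qed.

Lemma sublinear_opp (q : X -> R) (u : X) : sublinear q -> - q (scal (-1) u) <= q u.
Proof.
  intros Hq. pose proof (proj1 Hq u (scal (-1) u)) as H.
  rewrite rv_add_neg, sublinear_zero in H; auto. lra.
Qed.

(* [lower q y z = inf_{t >= 0} (q (z + t y) - t q y)]: a sublinear functional
   below [q]; if it does not lie strictly below [q], then [q] is additive along [y]. *)
Definition lower (q : X -> R) (y z : X) : R :=
  inf_on (fun t => 0 <= t) (fun t => q (add z (scal t y)) - t * q y).

Lemma lower_le (q : X -> R) (y z : X) (t : R) :
  sublinear q -> 0 <= t -> lower q y z <= q (add z (scal t y)) - t * q y.
Proof.
  intros Hq Ht.
  apply (inf_on_lb (fun s => 0 <= s) (fun s => q (add z (scal s y)) - s * q y) t); auto. exists (- q (scal (-1) z)). intros s Hs.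
  pose proof (proj1 Hq (add z (scal s y)) (scal (-1) z)) as H.
  replace (add (add z (scal s y)) (scal (-1) z)) with (scal s y) in H.
  - rewrite sublinear_hom in H; auto. lra.
  - rewrite (rv_addC X z), <- rv_addA, rv_add_neg, rv_add0. reflexivity.
Qed.

Lemma lower_le_self (q : X -> R) (y z : X) : sublinear q -> lower q y z <= q z.
Proof.
  intros Hq. pose proof (lower_le q y z 0 Hq (Rle_refl 0)) as H.
  rewrite rv_scal0, rv_add0 in H. lra.
Qed.

Lemma lower_sublinear (q : X -> R) (y : X) : sublinear q -> sublinear (lower q y).
Proof.
  intros Hq. assert (Hne : exists t : R, 0 <= t) by (exists 0; lra). split.
  - intros u v.
    assert (lower q y (add u v) - lower q y v <= lower q y u); [|lra].
    apply le_inf_on; auto. intros s Hs.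
    assert (lower q y (add u v) - (q (add u (scal s y)) - s * q y) <= lower q y v); [|lra].
    apply le_inf_on; auto. intros t Ht.
    pose proof (lower_le q y (add u v) (s + t) Hq ltac:(lra)) as H.
    replace (add (add u v) (scal (s + t) y))
      with (add (add u (scal s y)) (add v (scal t y))) in H.
    + pose proof (proj1 Hq (add u (scal s y)) (add v (scal t y))). lra.
    + rewrite rv_scal_addl, !rv_addA. f_equal.
      rewrite <- !rv_addA. f_equal. apply rv_addC.
  - intros s u Hs. destruct (Req_dec s 0) as [->|Hne0].
    + pose proof (lower_le q y (scal 0 u) 0 Hq (Rle_refl 0)) as H.
      rewrite !rv_scal0, rv_add0, (sublinear_zero q Hq) in H. rewrite rv_scal0. lra.
    + apply le_scaled_inf_on; [lra | auto |]. intros t Ht.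
      pose proof (lower_le q y (scal s u) (s * t) Hq ltac:(apply Rmult_le_pos; lra)) as H.
      rewrite <- rv_scal_mul, <- rv_scal_addr, (sublinear_hom q) in H; auto. lra.
Qed.

Definition minimal_sublinear (m : X -> R) : Prop :=
  sublinear m /\ forall g, sublinear g -> (forall z, g z <= m z) -> forall z, m z <= g z.

(* Minimality, tested against [lower m v], forces additivity, hence linearity. *)
Lemma minimal_sublinear_linear (m : X -> R) : minimal_sublinear m -> linear m.
Proof.
  intros [Hm Hmin].
  assert (Hadd : forall u v, m (add u v) = m u + m v).
  { intros u v. apply Rle_antisym; [apply Hm|].
    pose proof (Hmin (lower m v) (lower_sublinear m v Hm) (fun z => lower_le_self m v z Hm) u).
    pose proof (lower_le m v u 1 Hm ltac:(lra)) as H1. rewrite rv_scal1 in H1. lra. }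
  assert (Hopp : forall u, m (scal (-1) u) = - m u).
  { intros u. pose proof (Hadd u (scal (-1) u)) as H.
    rewrite rv_add_neg, sublinear_zero in H; auto. lra. }
  split; auto. intros t u. destruct (Rle_dec 0 t) as [Ht|Ht].
  - apply sublinear_hom; auto.
  - replace t with (- t * -1) by ring.
    rewrite <- rv_scal_mul, sublinear_hom, Hopp; [ring | auto | lra].
Qed.

Lemma chain_inf_sublinear {I : Type} (C : I -> Prop) (g : I -> X -> R) :
  (exists i, C i) -> (forall i, C i -> sublinear (g i)) ->
  (forall i j, C i -> C j -> (forall z, g i z <= g j z) \/ (forall z, g j z <= g i z)) ->
  (forall z, exists m, forall i, C i -> m <= g i z) ->
  sublinear (fun z => inf_on C (fun i => g i z)).
Proof.
  intros Hne Hsub Hchain Hlb.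
  assert (Hinf : forall i z, C i -> inf_on C (fun j => g j z) <= g i z).
  { intros i z Hi. apply (inf_on_lb C (fun j => g j z) i); auto. }
  split.
  - intros u v.
    assert (inf_on C (fun i => g i (add u v)) - inf_on C (fun i => g i v)
            <= inf_on C (fun i => g i u)); [|lra].
    apply le_inf_on; auto. intros i Hi.
    assert (inf_on C (fun i => g i (add u v)) - g i u <= inf_on C (fun i => g i v)); [|lra].
    apply le_inf_on; auto. intros j Hj.
    destruct (Hchain i j Hi Hj) as [Hij|Hji].
    + pose proof (Hinf i (add u v) Hi). pose proof (proj1 (Hsub i Hi) u v). specialize (Hij v). lra.
    + pose proof (Hinf j (add u v) Hj). pose proof (proj1 (Hsub j Hj) u v). specialize (Hji u). lra.
  - intros t u Ht. destruct (Req_dec t 0) as [->|Ht0].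
    + destruct Hne as [i Hi]. pose proof (Hinf i (scal 0 u) Hi) as H.
      rewrite rv_scal0, (sublinear_zero (g i) (Hsub i Hi)) in H. rewrite rv_scal0. lra.
    + apply le_scaled_inf_on; [lra | auto |]. intros i Hi.
      rewrite <- (sublinear_hom (g i) t u (Hsub i Hi) Ht). apply Hinf; auto.
Qed.

Lemma exists_minimal_below (q0 : X -> R) :
  sublinear q0 -> exists m, minimal_sublinear m /\ forall z, m z <= q0 z.
Proof.
  intros Hq0.
  set (T := {g : X -> R | sublinear g /\ forall z, g z <= q0 z}).
  set (below := fun g h : T => forall z, proj1_sig h z <= proj1_sig g z).
  set (rel := fun g h : T => if excluded_middle_informative (below g h) then true else false).
  assert (Hrel : forall g h, rel g h = true <-> below g h).
  { intros g h. unfold rel. destruct excluded_middle_informative; split; intros; auto; try discriminate; contradiction. }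
  set (top := exist _ q0 (conj Hq0 (fun z => Rle_refl (q0 z))) : T).
  destruct (@classical_sets.ZL_preorder T top rel) as [m Hm].
  - intros g. apply Hrel. intros z. lra.
  - intros f g h Hfg Hgh. apply Hrel. apply Hrel in Hfg, Hgh.
    intros z. specialize (Hfg z). specialize (Hgh z). lra.
  - intros A HA. set (C := fun g : T => g = top \/ A g).
    assert (Hlb : forall z, exists m, forall g, C g -> m <= proj1_sig g z).
    { intros z. exists (- q0 (scal (-1) z)). intros g _. destruct (proj2_sig g) as [Hs Hle].
      pose proof (sublinear_opp _ z Hs). specialize (Hle (scal (-1) z)). lra. }
    assert (Hsub : sublinear (fun z => inf_on C (fun g => proj1_sig g z))).
    { apply chain_inf_sublinear; auto.
      - exists top. left. reflexivity.
      - intros g _. exact (proj1 (proj2_sig g)).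
      - intros g h [->|Hg] [->|Hh].
        + left. intros z. lra.
        + right. exact (proj2 (proj2_sig h)).
        + left. exact (proj2 (proj2_sig g)).
        + destruct (HA g h Hg Hh) as [H|H]; apply Hrel in H; [right|left]; exact H. }
    assert (Hle : forall z, inf_on C (fun g => proj1_sig g z) <= q0 z).
    { intros z. apply (inf_on_lb C (fun g => proj1_sig g z) top); [apply Hlb | left; reflexivity]. }
    exists (exist _ (fun z => inf_on C (fun g => proj1_sig g z)) (conj Hsub Hle) : T). intros g Hg. apply Hrel. intros z.
    apply (inf_on_lb C (fun g => proj1_sig g z) g); [apply Hlb | right; exact Hg].
  - exists (proj1_sig m). split; [split|].
    + exact (proj1 (proj2_sig m)).
    + intros g Hg Hgm.
      assert (Hg0 : forall z, g z <= q0 z).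
      { intros z. specialize (Hgm z). pose proof (proj2 (proj2_sig m) z). lra. }
      set (gT := exist _ g (conj Hg Hg0) : T).
      exact (proj1 (Hrel gT m) (Hm gT (proj2 (Hrel m gT) Hgm))).
    + exact (proj2 (proj2_sig m)).
Qed.

Theorem hahn_banach (p : X -> R) (x0 : X) :
  sublinear p -> exists f, linear f /\ (forall z, f z <= p z) /\ p x0 <= f x0.
Proof.
  intros Hp.
  destruct (exists_minimal_below (lower p x0) (lower_sublinear p x0 Hp)) as [m [Hmin Hm]].
  pose proof (minimal_sublinear_linear m Hmin) as Hlin.
  exists m. split; [exact Hlin|]. split.
  - intros z. pose proof (Hm z). pose proof (lower_le_self p x0 z Hp). lra.
  - pose proof (Hm (scal (-1) x0)) as H1.
    pose proof (lower_le p x0 (scal (-1) x0) 1 Hp ltac:(lra)) as H2.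
    rewrite rv_scal1, rv_addC, rv_add_neg, (sublinear_zero p Hp) in H2.
    rewrite (proj2 Hlin) in H1. lra.
Qed.

End HahnBanach.


Lemma Cplx_eq (a b : Cplx) : Re a = Re b -> Im a = Im b -> a = b.
Proof. destruct a, b; simpl; intros -> ->; reflexivity. Qed.

Lemma Cabs_real (t : R) : Cabs (mkC t 0) = Rabs t.
Proof.
  unfold Cabs; simpl. replace (t * t + 0 * 0) with (Rsqr t) by (unfold Rsqr; ring).
  apply sqrt_Rsqr_abs.
Qed.

Lemma Cplx_rotate (w : Cplx) : exists c, Cabs c = 1 /\ Re (Cmul c w) = Cabs w.
Proof.
  destruct w as [u v]. set (r := Cabs (mkC u v)).
  assert (Hr2 : r * r = u * u + v * v) by (apply sqrt_sqrt; nra).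
  destruct (Req_dec r 0) as [Hr|Hr].
  - exists (mkC 1 0). split.
    + unfold Cabs; simpl. replace (1 * 1 + 0 * 0) with 1 by ring. apply sqrt_1.
    + unfold Cmul; simpl. rewrite Hr in *. nra.
  - assert (Hrpos : 0 < r) by (pose proof (sqrt_pos (u * u + v * v)); unfold r, Cabs in *; simpl in *; lra).
    exists (mkC (u / r) (- v / r)). split.
    + unfold Cabs; simpl. replace (u / r * (u / r) + - v / r * (- v / r)) with 1; [apply sqrt_1|].
      replace (u / r * (u / r) + - v / r * (- v / r)) with ((u * u + v * v) / (r * r))
        by (field; lra).
      rewrite <- Hr2. field. lra.
    + unfold Cmul; simpl.
      replace (u / r * u - - v / r * v) with ((u * u + v * v) / r) by (field; lra).
      rewrite <- Hr2. field. lra.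
Qed.

Lemma Cabs_nonpos_eq0 (c : Cplx) : Cabs c <= 0 -> c = C0.
Proof.
  destruct c as [a b]. unfold Cabs; simpl. intros Hc.
  assert (Hz : a * a + b * b = 0).
  { apply sqrt_eq_0; [nra|]. pose proof (sqrt_pos (a * a + b * b)). lra. }
  apply Cplx_eq; simpl; nra.
Qed.

Definition real_restriction (V : NormedCSpace) : RealVectorSpace.
Proof.
  refine {| rv := vT V; rv_add := vadd V; rv_scal := fun t u => vscal V (mkC t 0) u;
            rv_zero := vzero V |}.
  - apply vaddA.
  - apply vaddC.
  - apply vadd0.
  - intros a b u. rewrite <- vscal_addl. f_equal. apply Cplx_eq; simpl; ring.
  - intros a u v. apply vscal_addr.
  - intros a b u. rewrite <- vscal_mul. f_equal. apply Cplx_eq; simpl; ring.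
  - apply vscal1.
  - intros u. apply vnorm_eq0. rewrite vnorm_scal, Cabs_real, Rabs_R0. ring.
Defined.

Section BoundedSequences.
Variable V : NormedCSpace.

Lemma vadd_neg (u : V) : vadd V u (vscal V (mkC (-1) 0) u) = vzero V.
Proof. exact (rv_add_neg (real_restriction V) u). Qed.

Lemma vadd_swap (a b c d : V) :
  vadd V (vadd V a b) (vadd V c d) = vadd V (vadd V a c) (vadd V b d).
Proof. rewrite !vaddA. f_equal. rewrite <- !vaddA. f_equal. apply vaddC. Qed.

Lemma vscal_zero (u : V) : vscal V (mkC 0 0) u = vzero V.
Proof. exact (rv_scal0 (real_restriction V) u). Qed.

Lemma vscal_vzero (a : Cplx) : vscal V a (vzero V) = vzero V.
Proof.
  rewrite <- (vscal_zero (vzero V)).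
  rewrite <- vscal_mul. f_equal. apply Cplx_eq; simpl; ring.
Qed.

Lemma vnorm_zero : vnorm V (vzero V) = 0.
Proof.
  rewrite <- (vscal_zero (vzero V)), vnorm_scal, Cabs_real, Rabs_R0. ring.
Qed.

Lemma vnorm_nonneg (u : V) : 0 <= vnorm V u.
Proof.
  pose proof (vnorm_triangle V u (vscal V (mkC (-1) 0) u)) as H.
  rewrite vadd_neg, vnorm_zero, vnorm_scal, Cabs_real in H.
  replace (Rabs (-1)) with 1 in H by (rewrite Rabs_left; lra). lra.
Qed.

Lemma vsum_add (f g : nat -> V) (n : nat) :
  vsum V (fun i => vadd V (f i) (g i)) n = vadd V (vsum V f n) (vsum V g n).
Proof. induction n as [|n IH]; simpl; [now rewrite vadd0 | now rewrite IH, vadd_swap]. Qed.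

Lemma vsum_scal (c : Cplx) (f : nat -> V) (n : nat) :
  vsum V (fun i => vscal V c (f i)) n = vscal V c (vsum V f n).
Proof. induction n as [|n IH]; simpl; [now rewrite vscal_vzero | now rewrite IH, vscal_addr]. Qed.

Lemma vsum_norm_le (f : nat -> V) (M : R) (n : nat) :
  (forall i, vnorm V (f i) <= M) -> vnorm V (vsum V f n) <= INR n * M.
Proof.
  intros HM. induction n as [|n IH].
  - simpl. rewrite vnorm_zero. lra.
  - change (vsum V f (S n)) with (vadd V (vsum V f n) (f n)).
    eapply Rle_trans; [apply vnorm_triangle|]. rewrite S_INR. specialize (HM n). lra.
Qed.

Lemma vsum_telescope (w : nat -> V) (j m : nat) :
  vsum V (fun i => vadd V (w (S (i + j))%nat) (vscal V (mkC (-1) 0) (w (i + j)%nat))) m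
  = vadd V (w (m + j)%nat) (vscal V (mkC (-1) 0) (w j)).
Proof.
  induction m as [|m IH]; simpl.
  - symmetry. apply vadd_neg.
  - rewrite IH, (vaddC V (w (m + j)%nat)), vadd_swap, vadd_neg, vadd0. apply vaddC.
Qed.

Definition bseq : Type := {y : nat -> V | linf_bounded y}.

Lemma bseq_ext (a b : bseq) : (forall n, proj1_sig a n = proj1_sig b n) -> a = b.
Proof.
  destruct a as [a ha], b as [b hb]; simpl. intros H.
  assert (a = b) by (apply functional_extensionality; exact H). subst b.
  f_equal. apply proof_irrelevance.
Qed.

Lemma bnd_add (x y : nat -> V) : linf_bounded x -> linf_bounded y -> linf_bounded (seq_add V x y).
Proof.
  intros [M HM] [N HN]. exists (M + N). intros n. unfold seq_add.
  eapply Rle_trans; [apply vnorm_triangle|]. specialize (HM n). specialize (HN n). lra.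
Qed.

Lemma bnd_scal (c : Cplx) (x : nat -> V) : linf_bounded x -> linf_bounded (seq_scal V c x).
Proof.
  intros [M HM]. exists (Cabs c * M). intros n. unfold seq_scal. rewrite vnorm_scal.
  apply Rmult_le_compat_l; [apply sqrt_pos | apply HM].
Qed.

Lemma bnd_offset (x : nat -> V) (k : nat) : linf_bounded x -> linf_bounded (fun j => x (k + j)%nat).
Proof. intros [M HM]. exists M. intros n. apply HM. Qed.

Lemma bnd_zero : linf_bounded (fun _ : nat => vzero V).
Proof. exists 0. intros n. rewrite vnorm_zero. lra. Qed.

Lemma bnd_block_sum (x : nat -> V) (m : nat) :
  linf_bounded x -> linf_bounded (fun j => vsum V (fun i => x (i + j)%nat) m).
Proof.
  intros hx. induction m as [|m IH]; [apply bnd_zero|].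
  apply (bnd_add _ (fun j => x (m + j)%nat)); [exact IH | apply bnd_offset, hx].
Qed.

Definition badd (a b : bseq) : bseq :=
  exist _ (seq_add V (proj1_sig a) (proj1_sig b)) (bnd_add _ _ (proj2_sig a) (proj2_sig b)).
Definition bcscal (c : Cplx) (a : bseq) : bseq :=
  exist _ (seq_scal V c (proj1_sig a)) (bnd_scal c _ (proj2_sig a)).
Definition bscal (t : R) (a : bseq) : bseq := bcscal (mkC t 0) a.
Definition btimes_i (a : bseq) : bseq := bcscal (mkC 0 1) a.
Definition bshift (a : bseq) : bseq :=
  exist _ (shift V (proj1_sig a)) (bnd_offset _ 1 (proj2_sig a)).
Definition bzero : bseq := exist _ (fun _ => vzero V) bnd_zero.

Definition bseq_space : RealVectorSpace.
Proof.
  refine {| rv := bseq; rv_add := badd; rv_scal := bscal; rv_zero := bzero |};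
    intros; apply bseq_ext; intros n; simpl; unfold seq_add, seq_scal.
  - exact (rv_addA (real_restriction V) _ _ _).
  - exact (rv_addC (real_restriction V) _ _).
  - exact (rv_add0 (real_restriction V) _).
  - exact (rv_scal_addl (real_restriction V) _ _ _).
  - exact (rv_scal_addr (real_restriction V) _ _ _).
  - exact (rv_scal_mul (real_restriction V) _ _ _).
  - exact (rv_scal1 (real_restriction V) _).
  - exact (rv_scal0 (real_restriction V) _).
Defined.

Lemma bcscal_decomp (a b : R) (y : bseq) :
  bcscal (mkC a b) y = badd (bscal a y) (bscal b (btimes_i y)).
Proof.
  apply bseq_ext. intros n. simpl. unfold seq_add, seq_scal.
  rewrite <- vscal_mul, <- vscal_addl. f_equal. apply Cplx_eq; simpl; ring.
Qed.

Lemma btimes_i_twice (y : bseq) : btimes_i (btimes_i y) = bscal (-1) y.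
Proof.
  apply bseq_ext. intros n. simpl. unfold seq_scal.
  rewrite <- vscal_mul. f_equal. apply Cplx_eq; simpl; ring.
Qed.

Lemma btimes_i_add (y z : bseq) : btimes_i (badd y z) = badd (btimes_i y) (btimes_i z).
Proof. apply bseq_ext. intros n. apply vscal_addr. Qed.

Lemma btimes_i_scal (t : R) (y : bseq) : btimes_i (bscal t y) = bscal t (btimes_i y).
Proof.
  apply bseq_ext. intros n. simpl. unfold seq_scal.
  rewrite <- !vscal_mul. f_equal. apply Cplx_eq; simpl; ring.
Qed.

Lemma btimes_i_shift (y : bseq) : btimes_i (bshift y) = bshift (btimes_i y).
Proof. apply bseq_ext. intros n. reflexivity. Qed.

Lemma avg_nonneg (y : nat -> V) (m j : nat) : 0 <= avg V y m j.
Proof.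
  unfold avg. apply Rmult_le_pos; [|apply vnorm_nonneg].
  destruct m; [simpl; rewrite Rinv_0; lra | left; apply Rinv_0_lt_compat, lt_0_INR; lia].
Qed.

Lemma avg_le_bound (y : nat -> V) (M : R) (n j : nat) :
  (forall k, vnorm V (y k) <= M) -> avg V y (S n) j <= M.
Proof.
  intros HM. unfold avg.
  pose proof (vsum_norm_le (fun i => y (i + j)%nat) M (S n) (fun i => HM _)) as H.
  assert (Hn : 0 < INR (S n)) by (apply lt_0_INR; lia).
  apply Rmult_le_compat_l with (r := / INR (S n)) in H; [|left; apply Rinv_0_lt_compat; lra].
  rewrite <- Rmult_assoc, Rinv_l, Rmult_1_l in H; lra.
Qed.

Lemma avg_add_le (y z : nat -> V) (m j : nat) :
  avg V (seq_add V y z) m j <= avg V y m j + avg V z m j.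
Proof.
  unfold avg, seq_add. rewrite vsum_add, <- Rmult_plus_distr_l.
  apply Rmult_le_compat_l; [|apply vnorm_triangle].
  destruct m; [simpl; rewrite Rinv_0; lra | left; apply Rinv_0_lt_compat, lt_0_INR; lia].
Qed.

Lemma avg_rscal (y : nat -> V) (t : R) (m j : nat) :
  0 <= t -> avg V (seq_scal V (mkC t 0) y) m j = t * avg V y m j.
Proof.
  intros Ht. unfold avg, seq_scal.
  rewrite vsum_scal, vnorm_scal, Cabs_real, Rabs_right by lra. ring.
Qed.

Lemma avg_shift_diff_le (y : nat -> V) (M : R) (n j : nat) :
  (forall k, vnorm V (y k) <= M) ->
  avg V (seq_add V (shift V y) (seq_scal V (mkC (-1) 0) y)) (S n) j <= 2 * M / INR (S n).
Proof.
  intros HM. unfold avg, seq_add, seq_scal, shift. rewrite vsum_telescope.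
  assert (Hsum : vnorm V (vadd V (y (S n + j)%nat) (vscal V (mkC (-1) 0) (y j))) <= 2 * M).
  { eapply Rle_trans; [apply vnorm_triangle|]. rewrite vnorm_scal, Cabs_real.
    replace (Rabs (-1)) with 1 by (rewrite Rabs_left; lra).
    pose proof (HM (S n + j)%nat). pose proof (HM j). lra. }
  assert (Hn : 0 < / INR (S n)) by (apply Rinv_0_lt_compat, lt_0_INR; lia).
  unfold Rdiv. rewrite (Rmult_comm (2 * M)). apply Rmult_le_compat_l; lra.
Qed.

(* [block_sup y n] is s_n(y) = sup_j (1/(n+1)) ||y_j + ... + y_(j+n)||. *)
Definition block_sup (y : nat -> V) (n : nat) : R :=
  sup_on (fun _ : nat => True) (fun j => avg V y (S n) j).

Lemma avg_le_block_sup (y : nat -> V) (M : R) (n j : nat) :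
  (forall k, vnorm V (y k) <= M) -> avg V y (S n) j <= block_sup y n.
Proof.
  intros HM. apply (sup_on_ub (fun _ => True) (fun j => avg V y (S n) j) j); auto.
  exists M. intros i _. apply avg_le_bound, HM.
Qed.

Lemma block_sup_le (y : nat -> V) (n : nat) (c : R) :
  (forall j, avg V y (S n) j <= c) -> block_sup y n <= c.
Proof. intros Hc. apply sup_on_le; auto. exists 0%nat. auto. Qed.

Lemma block_sup_bounded (y : nat -> V) : linf_bounded y -> bounded_seq (block_sup y).
Proof.
  intros [M HM]. exists M. intros n. rewrite Rabs_right.
  - apply block_sup_le. intros j. apply avg_le_bound, HM.
  - apply Rle_ge, Rle_trans with (avg V y (S n) 0); [apply avg_nonneg | apply (avg_le_block_sup y M), HM].
Qed.

Definition p_upper (y : bseq) : R := limsup (block_sup (proj1_sig y)).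

Lemma p_upper_sublinear : sublinear bseq_space p_upper.
Proof.
  split.
  - intros [y hy] [z hz]. pose proof hy as [My HMy]. pose proof hz as [Mz HMz].
    apply limsup_le_sum; [apply block_sup_bounded; simpl; auto using bnd_add ..|].
    intros n. apply block_sup_le. intros j. eapply Rle_trans; [apply avg_add_le|].
    pose proof (avg_le_block_sup y My n j HMy). pose proof (avg_le_block_sup z Mz n j HMz). simpl. lra.
  - intros t [y hy] Ht. pose proof hy as [M HM].
    apply limsup_le_scale; [apply block_sup_bounded, hy | apply block_sup_bounded, bnd_scal, hy | exact Ht |].
    intros n. apply block_sup_le. intros j. simpl. rewrite avg_rscal by exact Ht.
    apply Rmult_le_compat_l; auto. apply (avg_le_block_sup y M), HM.
Qed.

Lemma p_upper_le_bound (y : bseq) (M : R) :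
  (forall n, vnorm V (proj1_sig y n) <= M) -> p_upper y <= M.
Proof.
  intros HM. apply limsup_le_const; [apply block_sup_bounded, proj2_sig|].
  intros n. apply block_sup_le. intros j. apply avg_le_bound, HM.
Qed.

Lemma p_upper_shift_diff (y : bseq) : p_upper (badd (bshift y) (bscal (-1) y)) <= 0.
Proof.
  destruct y as [y hy]. pose proof hy as [M HM].
  assert (HM0 : 0 <= M) by (pose proof (vnorm_nonneg (y 0%nat)); specialize (HM 0%nat); lra).
  apply (limsup_le_vanishing _ (2 * M)); [apply block_sup_bounded, proj2_sig | lra |].
  intros n. apply block_sup_le. intros j. apply avg_shift_diff_le, HM.
Qed.

Lemma p_upper_nonpos_pval (x : nat -> V) (hx : linf_bounded x) :
  p_upper (exist _ x hx) <= 0 -> p_val x 0.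
Proof.
  intros Hp. pose proof hx as [M HM]. exists (block_sup x). split.
  - intros n. apply (is_lub_ext (fun r => exists j, True /\ r = avg V x (S n) j)).
    + intros r. split; [intros [j [_ ->]] | intros [j ->]]; eauto.
    + apply sup_on_lub; [exists 0%nat; auto|]. exists M. intros j _. apply avg_le_bound, HM.
  - apply limsup_nonpos_cv; [apply block_sup_bounded, hx | | exact Hp].
    intros n. apply Rle_trans with (avg V x (S n) 0); [apply avg_nonneg | apply (avg_le_block_sup x M), HM].
Qed.

Definition complexify (f : bseq -> R) (y : nat -> V) : Cplx :=
  match excluded_middle_informative (linf_bounded y) with
  | left h => mkC (f (exist _ y h)) (- f (btimes_i (exist _ y h)))
  | right _ => C0
  end.

Lemma complexify_val (f : bseq -> R) (y : bseq) :
  complexify f (proj1_sig y) = mkC (f y) (- f (btimes_i y)).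
Proof.
  destruct y as [y hy]. unfold complexify. simpl.
  destruct excluded_middle_informative as [h|h]; [|contradiction].
  replace h with hy by apply proof_irrelevance. reflexivity.
Qed.

Section Complexification.
Variable f : bseq -> R.
Hypothesis f_linear : linear bseq_space f.
Hypothesis f_dominated : forall y, f y <= p_upper y.

Let f_add (a b : bseq) : f (badd a b) = f a + f b := proj1 f_linear a b.
Let f_scal (t : R) (a : bseq) : f (bscal t a) = t * f a := proj2 f_linear t a.

Lemma complexify_add (y z : bseq) :
  complexify f (proj1_sig (badd y z))
  = Cadd (complexify f (proj1_sig y)) (complexify f (proj1_sig z)).
Proof. rewrite !complexify_val, btimes_i_add, !f_add. apply Cplx_eq; simpl; ring. Qed.

Lemma complexify_scal (c : Cplx) (y : bseq) :
  complexify f (proj1_sig (bcscal c y)) = Cmul c (complexify f (proj1_sig y)).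
Proof.
  destruct c as [a b].
  rewrite !complexify_val, bcscal_decomp, btimes_i_add, !btimes_i_scal, btimes_i_twice,
    !f_add, !f_scal.
  apply Cplx_eq; simpl; ring.
Qed.

(* Domination by [p_upper] forces shift invariance, since p_upper (T y - y) <= 0. *)
Lemma dominated_shift_invariant (y : bseq) : f (bshift y) = f y.
Proof.
  assert (Hle : forall u, f (bshift u) <= f u).
  { intros u. pose proof (f_dominated (badd (bshift u) (bscal (-1) u))) as H.
    pose proof (p_upper_shift_diff u). rewrite f_add, f_scal in H. lra. }
  apply Rle_antisym; [apply Hle|].
  pose proof (Hle (bscal (-1) y)) as H.
  replace (bshift (bscal (-1) y)) with (bscal (-1) (bshift y)) in H by (apply bseq_ext; reflexivity).
  rewrite !f_scal in H. lra.
Qed.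

Lemma complexify_shift (y : bseq) :
  complexify f (proj1_sig (bshift y)) = complexify f (proj1_sig y).
Proof. rewrite !complexify_val, btimes_i_shift, !dominated_shift_invariant. reflexivity. Qed.

(* Rotating y by a unimodular scalar reduces |L y| <= ||y||_oo to f <= p_upper. *)
Lemma complexify_abs_le (y : bseq) (M : R) :
  (forall n, vnorm V (proj1_sig y n) <= M) -> Cabs (complexify f (proj1_sig y)) <= M.
Proof.
  intros HM. destruct (Cplx_rotate (complexify f (proj1_sig y))) as [c [Hc Hrot]].
  rewrite <- Hrot, <- complexify_scal, complexify_val. cbn [Re].
  eapply Rle_trans; [apply f_dominated|]. apply p_upper_le_bound.
  intros n. simpl. unfold seq_scal. rewrite vnorm_scal, Hc, Rmult_1_l. apply HM.
Qed.

Lemma complexify_banach_limit : BanachLimit (complexify f).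
Proof.
  split; [|split; [|split]].
  - intros x y hx hy. exact (complexify_add (exist _ x hx) (exist _ y hy)).
  - intros a x hx. exact (complexify_scal a (exist _ x hx)).
  - intros x M hx HM. exact (complexify_abs_le (exist _ x hx) M HM).
  - intros x hx. exact (complexify_shift (exist _ x hx)).
Qed.

End Complexification.

Section BanachLimitBound.
Variable L : (nat -> V) -> Cplx.
Hypothesis L_banach : BanachLimit L.

Lemma banach_limit_zero : L (fun _ => vzero V) = C0.
Proof.
  pose proof (proj1 L_banach _ _ bnd_zero bnd_zero) as H.
  replace (seq_add V (fun _ => vzero V) (fun _ => vzero V)) with (fun _ : nat => vzero V) in H
    by (apply functional_extensionality; intros; symmetry; apply vadd0).
  pose proof (f_equal Re H). pose proof (f_equal Im H). simpl in *.
  apply Cplx_eq; simpl; lra.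
Qed.

Lemma banach_limit_offset (x : nat -> V) (k : nat) :
  linf_bounded x -> L (fun j => x (k + j)%nat) = L x.
Proof.
  intros hx. induction k as [|k IH]; [reflexivity|]. rewrite <- IH.
  replace (fun j => x (S k + j)%nat) with (shift V (fun j => x (k + j)%nat))
    by (apply functional_extensionality; intros j; unfold shift; f_equal; lia).
  apply (proj2 (proj2 (proj2 L_banach))), bnd_offset, hx.
Qed.

Lemma banach_limit_block_sum (x : nat -> V) (m : nat) : linf_bounded x ->
  L (fun j => vsum V (fun i => x (i + j)%nat) m) = Cmul (mkC (INR m) 0) (L x).
Proof.
  intros hx. induction m as [|m IH].
  - simpl. rewrite banach_limit_zero. apply Cplx_eq; simpl; ring.
  - change (fun j => vsum V (fun i => x (i + j)%nat) (S m))
      with (seq_add V (fun j => vsum V (fun i => x (i + j)%nat) m) (fun j => x (m + j)%nat)).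
    rewrite (proj1 L_banach); [|apply bnd_block_sum, hx | apply bnd_offset, hx].
    rewrite IH, banach_limit_offset, S_INR by exact hx.
    apply Cplx_eq; unfold Cadd, Cmul; cbn [Re Im]; ring.
Qed.

(* L x is also L of the (n+1)-block averages of x, whose norms are at most s_n(x). *)
Lemma banach_limit_abs_le_avg (x : nat -> V) (n : nat) (M : R) :
  linf_bounded x -> (forall j, avg V x (S n) j <= M) -> Cabs (L x) <= M.
Proof.
  intros hx HM. set (Y := fun j => vsum V (fun i => x (i + j)%nat) (S n)).
  assert (Hn : 0 < INR (S n)) by (apply lt_0_INR; lia).
  assert (HLY : L (seq_scal V (mkC (/ INR (S n)) 0) Y) = L x).
  { rewrite (proj1 (proj2 L_banach)) by (apply bnd_block_sum, hx).
    unfold Y. rewrite banach_limit_block_sum by exact hx.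
    apply Cplx_eq; unfold Cmul; cbn [Re Im]; field; lra. }
  rewrite <- HLY. apply (proj1 (proj2 (proj2 L_banach))); [apply bnd_scal, bnd_block_sum, hx|].
  intros j. unfold seq_scal.
  rewrite vnorm_scal, Cabs_real, Rabs_right by (left; apply Rinv_0_lt_compat, Hn).
  apply HM.
Qed.

Lemma banach_limit_vanishes (x : nat -> V) : linf_bounded x -> p_val x 0 -> L x = C0.
Proof.
  intros hx [s [Hs Hcv]]. apply Cabs_nonpos_eq0, Rnot_lt_le. intros Hpos.
  assert (Hbound : forall n, Cabs (L x) <= s n).
  { intros n. apply (banach_limit_abs_le_avg x n); auto.
    intros j. apply (proj1 (Hs n)). exists j. reflexivity. }
  destruct (Hcv _ Hpos) as [N HN]. specialize (HN N (Nat.le_refl N)). specialize (Hbound N).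
  unfold R_dist in HN. rewrite Rminus_0_r in HN. pose proof (Rle_abs (s N)). lra.
Qed.

End BanachLimitBound.

End BoundedSequences.

Theorem mainTheorem10 (V : NormedCSpace) (x : nat -> V) (hx : linf_bounded x) :
  p_val x 0 <-> (forall Lf : (nat -> V) -> Cplx, BanachLimit Lf -> Lf x = C0).
Proof.
  split.
  - intros Hp L HL. exact (banach_limit_vanishes V L HL x hx Hp).
  - intros Hvanish. apply (p_upper_nonpos_pval V x hx).
    destruct (hahn_banach (bseq_space V) (p_upper V) (exist _ x hx) (p_upper_sublinear V))
      as [f [Hlin [Hdom Hfx]]].
    pose proof (Hvanish _ (complexify_banach_limit V f Hlin Hdom)) as H0.
    change x with (proj1_sig (exist linf_bounded x hx)) in H0.
    rewrite complexify_val in H0. apply (f_equal Re) in H0. simpl in H0. lra.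
Qed.
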